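(* Let $k\ge1$, $G=(V,E)$ an inductively $k$-independent graph with $k$-independence ordering $v_1,\dots,v_n$, $f:2^V\to\mathbb{R}_{\ge0}$ submodular with $f(\emptyset)=0$, $\beta>0$ and $p\in(0,1)$. Let $S_{\mathrm{out}}$ be the output of algorithm PD-RAND (described in the context) and $\mathrm{OPT}=\max\{f(T):T\text{ independent in }G\}$. Then \[ \mathrm{OPT}\le\frac{k\max\{\frac{1-p}{p},1+\beta\}+\frac{1+\beta}{\beta}}{1-p}\;\mathbb{E}[f(S_{\mathrm{out}})]. \]
   Context: $N(v)$ is the neighbourhood of $v$ (excluding $v$); $G$ is inductively $k$-independent with $k$-independence ordering $v_1,\dots,v_n$ if for every $i$, $G[N(v_i)\cap\{v_i,\dots,v_n\}]$ has no independent set of size more than $k$. For $S\subseteq V$, $f_S(v)=f(S\cup\{v\})-f(S)$. Algorithm PD-RAND (parameters $\beta>0$, $p\in(0,1)$). Phase 1: start with $S=\emptyset$ (a stack) and $w_1=\dots=w_n=0$. For $i=1,\dots,n$: let $C_i=N(v_i)\cap S$ for the current $S$; if $f_S(v_i)>(1+\beta)\sum_{v_j\in C_i}w_j$, then with probability $p$ (independently of all else) set $w_i=f_S(v_i)-\sum_{v_j\in C_i}w_j$ (with $S$ the set before insertion) and push $v_i$ onto $S$; in all other cases leave $w_i=0$ and do not add $v_i$. Let $S_{\mathrm{end}}$ be $S$ at the end of Phase 1. Phase 2: with $S_{\mathrm{out}}=\emptyset$, pop vertices of $S_{\mathrm{end}}$ in reverse insertion order, adding a popped $v$ to $S_{\mathrm{out}}$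 whenever $S_{\mathrm{out}}\cup\{v\}$ is independent. Output $S_{\mathrm{out}}$. *)

From HB Require Import structures.
From mathcomp Require Import all_boot all_order all_algebra.
Set Implicit Arguments. Unset Strict Implicit. Unset Printing Implicit Defensive.
Import Order.TTheory GRing.Theory Num.Theory.
Local Open Scope ring_scope.

Section PDRand.
Variables (R : realFieldType) (V : finType).

Definition simple_graph (e : rel V) : Prop := symmetric e /\ irreflexive e.

Definition nbhd (e : rel V) (v : V) : {set V} := [set u | e v u].

Definition independent (e : rel V) (A : {set V}) : bool :=
  [forall x in A, forall y in A, ~~ e x y].

Definition vertex_ordering (vs : seq V) : Prop := uniq vs /\ forall v, v \in vs.

Definition inductively_k_independent (e : rel V) (k : nat) (vs : seq V) : Prop :=
  vertex_ordering vs /\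
  forall (i : 'I_(size vs)) (A : {set V}),
    A \subset nbhd e (tnth (in_tuple vs) i) :&: [set x in drop i vs] ->
    independent e A -> (#|A| <= k)%N.

Definition submodular (f : {set V} -> R) : Prop :=
  forall A B : {set V}, f (A :|: B) + f (A :&: B) <= f A + f B.

Definition marginal (f : {set V} -> R) (S : {set V}) (v : V) : R :=
  f (v |: S) - f S.

(* Phase 1 state: the stack S (top = head of the list, i.e. most recently
   pushed first) and the weights w. *)
Definition phase1_step (e : rel V) (f : {set V} -> R) (beta : R)
    (coin : V -> bool) (st : seq V * (V -> R)) (v : V) : seq V * (V -> R) :=
  let: (Sk, w) := st in
  let Sset := [set x in Sk] in
  let sumw := \sum_(u in nbhd e v :&: Sset) w u in
  let fSv := marginal f Sset v in
  if (fSv > (1 + beta) * sumw) && coin v then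
    (v :: Sk, fun u => if u == v then fSv - sumw else w u)
  else (Sk, w).

(* coin v = outcome of the independent probability-p coin used when v is
   considered (only consulted if the threshold test passes) *)
Definition phase1 (e : rel V) (f : {set V} -> R) (beta : R)
    (coin : V -> bool) (vs : seq V) : seq V * (V -> R) :=
  foldl (phase1_step e f beta coin) ([::], fun _ => 0) vs.

(* Phase 2: pop S_end in reverse insertion order (= head first) *)
Definition phase2 (e : rel V) (Send : seq V) : {set V} :=
  foldl (fun Sout v => if independent e (v |: Sout) then v |: Sout else Sout)
        set0 Send.

Definition pd_rand (e : rel V) (f : {set V} -> R) (beta : R)
    (coin : V -> bool) (vs : seq V) : {set V} :=
  phase2 e (phase1 e f beta coin vs).1.

Definition coin_prob (p : R) (b : {ffun V -> bool}) : R :=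
  \prod_(v : V) (if b v then p else 1 - p).

Definition expected_output (e : rel V) (f : {set V} -> R) (beta p : R)
    (vs : seq V) : R :=
  \sum_(b : {ffun V -> bool}) coin_prob p b * f (pd_rand e f beta b vs).

End PDRand.

(* Fix an independent set T and a run of Phase 1 with final stack S.  The weights w form a
   tight dual: each pushed v has w_v + w(N(v) ∩ S_below) = f_{S_below}(v) and
   w_v > β w(N(v) ∩ S_below), hence β f(S) ≤ (1 + β) w(S); and every vertex of S is either
   kept by Phase 2 or has a neighbour pushed later that is kept, so w(S) ≤ f(S_out).
   By submodularity f(T ∪ S) ≤ f(S) + Σ_{t ∈ T} f_{S_t}(t), S_t being the stack when t is
   examined.  If t fails the threshold test, f_{S_t}(t) ≤ (1 + β) w(N(t) ∩ S_t); if it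
   passes, its coin is independent of S_t, so losing the coin costs (1 - p)/p times the gain
   of winning it, and that gain is w_t + w(N(t) ∩ S_t).  Charging w(N(t) ∩ S_t) to the
   vertices of S, each u ∈ S is charged at most k times, since the vertices of T adjacent to
   u and examined after u form an independent set in the later neighbourhood of u.  Finally
   E f(T ∪ S) ≥ (1 - p) f(T) because each vertex lies in S with probability at most p. *)

From HB Require Import structures.
From mathcomp Require Import all_boot all_order all_algebra.
From mathcomp Require Import ring lra.
Import Order.TTheory GRing.Theory Num.Theory.
Local Open Scope ring_scope.
Set Implicit Arguments. Unset Strict Implicit. Unset Printing Implicit Defensive.

Section Submodular.
Variables (R : realFieldType) (V : finType) (f : {set V} -> R).

Lemma setU1_marginal (A : {set V}) x : f (x |: A) = f A + marginal f A x.
Proof. by rewrite /marginal addrC subrK. Qed.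

Lemma marginal_mem (A : {set V}) x : x \in A -> marginal f A x = 0.
Proof. by move=> xA; rewrite /marginal (setUidPr _) ?subrr // sub1set. Qed.

Hypothesis f_sub : submodular f.

Lemma marginal_antimono (A B : {set V}) x : A \subset B -> x \notin B ->
  marginal f B x <= marginal f A x.
Proof.
move=> sAB xB; have := f_sub (x |: A) B.
have -> : (x |: A) :|: B = x |: B by rewrite -setUA (setUidPr sAB).
have -> : (x |: A) :&: B = A.
  by rewrite setIUl (setIidPl sAB) disjoint_setI0 ?set0U ?disjoints1.
rewrite /marginal; lra.
Qed.

Lemma submodular_le_marginal_sum (S T : {set V}) :
  f (S :|: T) <= f S + \sum_(t in T) marginal f S t.
Proof.
rewrite -[in f (S :|: T)](set_enum T) -big_enum /=.
elim: (enum T) (enum_uniq (mem T)) => [|x s IH] /=.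
  by move=> _; rewrite big_nil addr0 (_ : [set x in [::]] = set0) ?setU0 //; apply/setP.
case/andP=> xs /IH; rewrite big_cons.
have -> : S :|: [set y in x :: s] = x |: (S :|: [set y in s]).
  by apply/setP => y; rewrite !inE orbCA.
rewrite setU1_marginal.
have [xS|xS] := boolP (x \in S).
  by rewrite !marginal_mem ?inE ?xS //; lra.
suff : marginal f (S :|: [set y in s]) x <= marginal f S x by lra.
by apply: marginal_antimono; rewrite ?subsetUl // !inE negb_or xS.
Qed.

Lemma submodular_setUl (T : {set V}) : submodular (fun A => f (T :|: A)).
Proof. by move=> A B; rewrite /= setUIr setUUr; apply: f_sub. Qed.

End Submodular.

Section Expectation.
Variables (R : realFieldType) (O : finType) (mu : O -> R).

Definition expect (g : O -> R) : R := \sum_x mu x * g x.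

Lemma eq_expect (g h : O -> R) : g =1 h -> expect g = expect h.
Proof. by move=> gh; apply: eq_bigr => x _; rewrite gh. Qed.

Lemma expectD (g h : O -> R) : expect (fun x => g x + h x) = expect g + expect h.
Proof. by rewrite /expect -big_split; apply: eq_bigr => x _; rewrite mulrDr. Qed.

Lemma expectZ a (g : O -> R) : expect (fun x => a * g x) = a * expect g.
Proof. by rewrite /expect mulr_sumr; apply: eq_bigr => x _; rewrite mulrCA. Qed.

Lemma expect_sum (I : Type) (r : seq I) (P : pred I) (F : I -> O -> R) :
  expect (fun x => \sum_(i <- r | P i) F i x) = \sum_(i <- r | P i) expect (F i).
Proof. by rewrite /expect; under eq_bigr do rewrite mulr_sumr; apply: exchange_big. Qed.

Hypothesis mu_ge0 : forall x, 0 <= mu x.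

Lemma ler_expect (g h : O -> R) : (forall x, g x <= h x) -> expect g <= expect h.
Proof. by move=> gh; apply: ler_sum => x _; apply: ler_wpM2l. Qed.

Hypothesis mu_sum1 : \sum_x mu x = 1.

Lemma expect_cst a : expect (fun=> a) = a.
Proof. by rewrite /expect -big_distrl /= mu_sum1 mul1r. Qed.

Variables (V : finType) (h : {set V} -> R) (F : O -> {set V}) (q : R).
Hypotheses (h_ge0 : forall A, 0 <= h A) (h_sub : submodular h).
Hypothesis F_le : forall v, expect (fun x => (v \in F x)%:R) <= q.

Let prob v := expect (fun x => (v \in F x)%:R).

(* The bound of Feige, Mirrokni and Vondrák, by induction on [D], removing a vertex of least
   inclusion probability. *)
Lemma submodular_expect_setI (D : {set V}) r :
  0 <= r -> r <= q -> (forall v, v \in D -> r <= prob v) ->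
  (1 - q) * h set0 + r * h D <= expect (fun x => h (F x :&: D)).
Proof.
move Dn: #|D| => n; elim: n D r Dn => [|n IH] D r Dn r0 rq rD.
  move/eqP: Dn; rewrite cards_eq0 => /eqP ->.
  have -> : expect (fun x => h (F x :&: set0)) = h set0.
    by rewrite -[RHS]expect_cst; apply: eq_expect => x; rewrite setI0.
  have := h_ge0 set0; nra.
have [u0 u0D] : exists u0, u0 \in D by apply/set0Pn; rewrite -card_gt0 Dn.
case: (arg_minP prob u0D) => u uD prob_min; have {}uD : u \in D := uD.
set D' := D :\ u.
have D'n : #|D'| = n by have := cardsD1 u D; rewrite uD Dn add1n => -[].
have prob_ge0 : 0 <= prob u by apply: sumr_ge0 => x _; rewrite mulr_ge0.
have IHu : (1 - q) * h set0 + prob u * h D' <= expect (fun x => h (F x :&: D')).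
  by apply: IH D'n prob_ge0 (F_le u) _ => v; rewrite !inE => /andP[_ /prob_min].
have gain x : h (F x :&: D') + (h D - h D') * (u \in F x)%:R <= h (F x :&: D).
  have [uF|uF] := boolP (u \in F x); last first.
    rewrite mulr0 addr0 (_ : F x :&: D = F x :&: D') //; apply/setP => y.
    by rewrite !inE; case: eqP => // ->; rewrite (negbTE uF).
  have eD : D = u |: D' by rewrite setD1K.
  have eFD : F x :&: D = u |: (F x :&: D') by rewrite eD setIUr (setIidPr _) ?sub1set.
  have := marginal_antimono h_sub (subsetIr (F x) D') (x := u).
  by rewrite /marginal -eD -eFD !inE eqxx /= mulr1 => /(_ isT); lra.
have := ler_expect gain; rewrite expectD expectZ -/(prob u).
have := rD u uD; have := h_ge0 D; nra.
Qed.

Lemma submodular_expect_ge : 0 <= q -> (1 - q) * h set0 <= expect (fun x => h (F x)).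
Proof.
move=> q0; have := @submodular_expect_setI [set: V] 0 (lexx 0) q0.
rewrite mul0r addr0 (_ : expect _ = expect (fun x => h (F x))).
  by apply=> v _; apply: sumr_ge0 => x _; rewrite mulr_ge0.
by apply: eq_expect => x; rewrite setIT.
Qed.

End Expectation.

Section Coins.
Variables (R : realFieldType) (V : finType) (p : R).

Local Notation E := (expect (coin_prob p)).

Lemma coin_prob_sum1 : \sum_(b : {ffun V -> bool}) coin_prob p b = 1.
Proof.
rewrite /coin_prob -(bigA_distr_bigA (fun _ (j : bool) => if j then p else 1 - p)).
by rewrite big1 // => v _; rewrite big_bool /= addrC subrK.
Qed.

Definition flip_at (t : V) (b : {ffun V -> bool}) : {ffun V -> bool} :=
  [ffun v => if v == t then ~~ b v else b v].

Lemma flip_atK t : involutive (flip_at t).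
Proof. by move=> b; apply/ffunP => v; rewrite !ffunE; case: eqP; rewrite ?negbK. Qed.

Lemma expect_coin_true t (G : {ffun V -> bool} -> R) :
  (forall b, G (flip_at t b) = G b) -> E (fun b => G b * (b t)%:R) = p * E G.
Proof.
move=> Gflip.
pose rest (b : {ffun V -> bool}) := \prod_(v | v != t) (if b v then p else 1 - p).
have coin_probE b : coin_prob p b = (if b t then p else 1 - p) * rest b.
  by rewrite /coin_prob (bigD1 t).
have rest_flip b : rest (flip_at t b) = rest b.
  by apply: eq_bigr => v vt; rewrite ffunE (negbTE vt).
pose Z := \sum_(b : {ffun V -> bool}) rest b * G b * (b t)%:R.
have heads : E (fun b => G b * (b t)%:R) = p * Z.
  rewrite mulr_sumr; apply: eq_bigr => b _; rewrite coin_probE.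
  by case: (b t); rewrite /= ?mulr1n ?mulr0n; ring.
(* Flipping the coin of t maps the outcomes with tails bijectively onto those with heads. *)
have tails : E (fun b => G b * (~~ b t)%:R) = (1 - p) * Z.
  rewrite /expect (reindex_inj (can_inj (flip_atK t))) /= mulr_sumr.
  apply: eq_bigr => b _; rewrite coin_probE rest_flip Gflip ffunE eqxx.
  by case: (b t); rewrite /= ?mulr1n ?mulr0n; ring.
have -> : E G = p * Z + (1 - p) * Z.
  rewrite -heads -tails -expectD; apply: eq_expect => b.
  by case: (b t); rewrite /= ?mulr1n ?mulr0n; ring.
by rewrite heads; ring.
Qed.

Lemma expect_coin_false t (G : {ffun V -> bool} -> R) :
  (forall b, G (flip_at t b) = G b) -> E (fun b => G b * (~~ b t)%:R) = (1 - p) * E G.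
Proof.
move=> Gflip; have : E G = E (fun b => G b * (b t)%:R) + E (fun b => G b * (~~ b t)%:R).
  rewrite -expectD; apply: eq_expect => b.
  by case: (b t); rewrite /= ?mulr1n ?mulr0n; ring.
rewrite expect_coin_true //; lra.
Qed.

Hypotheses (p_gt0 : 0 < p) (p_lt1 : p < 1).

Lemma coin_prob_ge0 (b : {ffun V -> bool}) : 0 <= coin_prob p b.
Proof. by apply: prodr_ge0 => v _; case: (b v); rewrite ?subr_ge0 ltW. Qed.

End Coins.

Section Phase1.
Variables (R : realFieldType) (V : finType) (e : rel V) (f : {set V} -> R) (beta : R).

Local Notation step c := (phase1_step e f beta c).

Lemma foldl_step_coin_eq (c c' : V -> bool) s st :
  {in s, c =1 c'} -> foldl (step c) st s = foldl (step c') st s.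
Proof.
elim: s st => [|v s IH] st cc' //=.
rewrite (_ : step c st v = step c' st v); last first.
  by case: st => Sk w; rewrite /phase1_step cc' ?mem_head.
by apply: IH => x xs; apply: cc'; rewrite inE xs orbT.
Qed.

Lemma mem_phase1_step c st v x : x \in (step c st v).1 -> (x \in st.1) || (x == v).
Proof.
case: st => Sk w; rewrite /phase1_step; case: ifP => _ /=; last by move->.
by rewrite inE orbC.
Qed.

Lemma foldl_step_stack_mono c s st x : x \in st.1 -> x \in (foldl (step c) st s).1.
Proof.
elim: s st => [|v s IH] st //= xS; apply: IH.
by case: st xS => Sk w xS; rewrite /phase1_step; case: ifP => //= _; rewrite inE xS orbT.
Qed.

Lemma foldl_step_stack_sub c s st x :
  x \in (foldl (step c) st s).1 -> (x \in st.1) || (x \in s).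
Proof.
elim: s st => [|v s IH] st /=; first by rewrite orbF.
move/IH; rewrite inE => /orP[/mem_phase1_step/orP[->//|->]|->]; by rewrite !orbT.
Qed.

Lemma foldl_step_weight_out c s st u : u \notin s -> (foldl (step c) st s).2 u = st.2 u.
Proof.
elim: s st => [|v s IH] st //=; rewrite inE negb_or => /andP[uv us].
rewrite IH //; case: st => Sk w; rewrite /phase1_step.
by case: ifP => //= _; rewrite (negbTE uv).
Qed.

(* Stacks are listed most recent first; the dual constraint of each pushed vertex is tight
   with respect to the stack below it. *)
Fixpoint tight_stack (w : V -> R) (L : seq V) : Prop :=
  if L is v :: L' then
    [/\ tight_stack w L',
        w v + \sum_(u in nbhd e v :&: [set x in L']) w u = marginal f [set x in L'] v &
        beta * \sum_(u in nbhd e v :&: [set x in L']) w u < w v]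
  else True.

Lemma eq_in_tight_stack w w' L : {in L, w =1 w'} -> tight_stack w L -> tight_stack w' L.
Proof.
elim: L => [|v L IH] //= ww' [tL wv bv].
have wwL : {in L, w =1 w'} by move=> x xL; apply: ww'; rewrite inE xL orbT.
have sum_eq : \sum_(u in nbhd e v :&: [set x in L]) w u =
              \sum_(u in nbhd e v :&: [set x in L]) w' u.
  by apply: eq_bigr => u; rewrite !inE => /andP[_ /wwL].
by rewrite -sum_eq -ww' ?mem_head; split => //; apply: IH.
Qed.

Lemma tight_stack_f_le (w : V -> R) (L : seq V) : f set0 = 0 -> tight_stack w L -> uniq L ->
  beta * f [set x in L] <= (1 + beta) * \sum_(u in [set x in L]) w u.
Proof.
move=> f0; elim: L => [|v L IH] /=.
  by move=> _ _; rewrite (_ : [set x in [::]] = set0) ?big_set0 ?f0 ?mulr0 //; apply/setP.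
case=> [tL wv bv] /andP[vL uL]; have := IH tL uL.
rewrite (_ : [set x in v :: L] = v |: [set x in L]); last by apply/setP => x; rewrite !inE.
rewrite big_setU1 ?inE //= setU1_marginal -wv; nra.
Qed.

Definition phase1_inv (st : seq V * (V -> R)) : Prop :=
  [/\ uniq st.1, forall u, 0 <= st.2 u & tight_stack st.2 st.1].

Hypothesis beta_gt0 : 0 < beta.

Lemma phase1_step_inv c st v : phase1_inv st -> v \notin st.1 -> phase1_inv (step c st v).
Proof.
case: st => Sk w [/= uS w_ge0 tS] vS; rewrite /phase1_step; case: ifP => //= /andP[pass _].
set sw := \sum_(u in _) w u in pass *.
have sw_ge0 : 0 <= sw by apply: sumr_ge0 => u _.
have bsw_ge0 : 0 <= beta * sw by rewrite mulr_ge0 // ltW.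
have sum_new : \sum_(u in nbhd e v :&: [set x in Sk])
    (if u == v then marginal f [set x in Sk] v - sw else w u) = sw.
  by apply: eq_bigr => u; rewrite !inE => /andP[_]; case: eqP => // ->; rewrite (negbTE vS).
split => /=; first by rewrite vS.
  by move=> u; case: eqP => _ //; lra.
rewrite eqxx sum_new subrK; split => //; last lra.
by apply: eq_in_tight_stack tS => x xS; case: eqP => // xv; rewrite -xv xS in vS.
Qed.

Lemma foldl_step_inv c s st : phase1_inv st -> uniq s -> {in st.1, forall x, x \notin s} ->
  phase1_inv (foldl (step c) st s).
Proof.
elim: s st => [|v s IH] st //= inv /andP[vs us] disj.
apply: IH => //; first by apply: phase1_step_inv => //; apply/negP => /disj; rewrite mem_head.
move=> x /mem_phase1_step/orP[/disj|/eqP-> //]; by rewrite inE negb_or => /andP[].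
Qed.

End Phase1.

Section NonnegSums.
Variables (R : realFieldType) (V : finType) (w : V -> R).
Hypothesis w_ge0 : forall u, 0 <= w u.

Lemma sumr_subset_le (A B : {set V}) : A \subset B -> \sum_(u in A) w u <= \sum_(u in B) w u.
Proof.
move=> sAB; rewrite [X in _ <= X](big_setID A) /= (setIidPr sAB) lerDl.
exact: sumr_ge0.
Qed.

Lemma sumr_setU_le (A B : {set V}) :
  \sum_(u in A :|: B) w u <= \sum_(u in A) w u + \sum_(u in B) w u.
Proof.
rewrite (big_setID A) /= setUK lerD2l; apply: sumr_subset_le.
by rewrite setDUl setDv set0U subsetDl.
Qed.

End NonnegSums.

Section Independence.
Variables (V : finType) (e : rel V).

Lemma independentP (A : {set V}) x y : independent e A -> x \in A -> y \in A -> ~~ e x y.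
Proof. by move=> /forallP/(_ x)/implyP iA xA; move/forallP/(_ y)/implyP: (iA xA); apply. Qed.

Lemma independent_subset (A B : {set V}) : A \subset B -> independent e B -> independent e A.
Proof.
move=> sAB iB; apply/forallP => x; apply/implyP => xA; apply/forallP => y; apply/implyP => yA.
by apply: (independentP iB); apply: (subsetP sAB).
Qed.

Lemma inductively_k_independentP k vs u (A : {set V}) : inductively_k_independent e k vs ->
  A \subset nbhd e u :&: [set x in drop (index u vs) vs] -> independent e A -> (#|A| <= k)%N.
Proof.
case=> [[_ mem_vs] k_indep]; have iu : (index u vs < size vs)%N by rewrite index_mem.
by have := k_indep (Ordinal iu) A; rewrite (tnth_nth u) /= nth_index.
Qed.

Hypothesis e_simple : simple_graph e.

Lemma independent_setU1 (A : {set V}) u : independent e A ->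
  {in A, forall v, ~~ e u v} -> independent e (u |: A).
Proof.
case: e_simple => e_sym e_irr iA uA.
apply/forallP => x; apply/implyP; rewrite in_setU1 => /orP[/eqP->|xA];
  apply/forallP => y; apply/implyP; rewrite in_setU1 => /orP[/eqP->|yA].
- by rewrite e_irr.
- exact: uA.
- by rewrite e_sym uA.
- exact: independentP iA xA yA.
Qed.

Lemma not_independent_setU1 (A : {set V}) u : independent e A ->
  ~~ independent e (u |: A) -> exists2 v, v \in A & e u v.
Proof.
move=> iA; case: (boolP [exists v in A, e u v]) => [/exists_inP[v]|no_nbr]; first by exists v.
move/negP; case; apply: independent_setU1 => // v vA.
by apply: contra no_nbr => euv; apply/exists_inP; exists v.
Qed.

End Independence.

Lemma take_index_cons (T : eqType) (x u : T) (s : seq T) :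
  u != x -> take (index u (x :: s)) (x :: s) = x :: take (index u s) s.
Proof. by move=> ux; rewrite /= eq_sym (negbTE ux). Qed.

Section Phase2.
Variables (V : finType) (e : rel V).
Hypothesis e_simple : simple_graph e.

Definition greedy_step (S : {set V}) (v : V) : {set V} :=
  if independent e (v |: S) then v |: S else S.

Definition greedy_from (A : {set V}) (L : seq V) : {set V} := foldl greedy_step A L.

Lemma greedy_step_sub (S : {set V}) v : greedy_step S v \subset v |: S.
Proof. by rewrite /greedy_step; case: ifP => _; rewrite ?subsetUr. Qed.

Lemma greedy_from_indep (A : {set V}) (L : seq V) :
  independent e A -> independent e (greedy_from A L).
Proof. by elim: L A => [|v L IH] A //= iA; apply: IH; rewrite /greedy_step; case: ifP. Qed.

Lemma greedy_from_sup (A : {set V}) (L : seq V) : A \subset greedy_from A L.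
Proof.
elim: L A => [|v L IH] A /=; first exact: subxx.
by apply: subset_trans (IH _); rewrite /greedy_step; case: ifP; rewrite ?subsetUr.
Qed.

Lemma greedy_from_sub (A : {set V}) (L : seq V) : greedy_from A L \subset A :|: [set x in L].
Proof.
elim: L A => [|v L IH] A /=; first by rewrite subsetUl.
apply/subsetP => x /(subsetP (IH _)); rewrite !inE.
case/orP => [/(subsetP (greedy_step_sub A v))|->]; last by rewrite !orbT.
by rewrite !inE => /orP[]->; rewrite ?orbT.
Qed.

Lemma greedy_from_dominates (A : {set V}) (L : seq V) u :
    independent e A -> u \in L -> u \notin greedy_from A L ->
  exists2 v, v \in greedy_from A L & e u v && ((v \in A) || (v \in take (index u L) L)).
Proof.
elim: L A => [|x L IH] A // iA; set A' := greedy_step A x.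
have iA' : independent e A' by apply: (greedy_from_indep [:: x]).
have sAA' : A \subset A' := greedy_from_sup A [:: x].
case: (eqVneq u x) => [->|ux] uxL uout.
  have xA' : x \notin A' by apply: contra uout; apply: (subsetP (greedy_from_sup _ _)).
  have [|v vA exv] := not_independent_setU1 e_simple iA (u := x).
    by apply: contra xA' => ix; rewrite /A' /greedy_step ix setU11.
  exists v; first by apply: (subsetP (greedy_from_sup A' L)); apply: (subsetP sAA').
  by rewrite exv vA.
have uL : u \in L by rewrite inE (negbTE ux) in uxL.
have [v vout /andP[euv vA'L]] := IH A' iA' uL uout.
exists v; rewrite // euv take_index_cons //= inE.
case/orP: vA'L => [/(subsetP (greedy_step_sub A x))|->]; last by rewrite !orbT.
by rewrite !inE => /orP[]->; rewrite ?orbT.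
Qed.

(* In a stack [L], [take (index u L) L] lists the vertices pushed after [u]. *)
Definition covered (L : seq V) (O : {set V}) : {set V} :=
  [set u in L | (u \in O) || [exists v in O, e u v && (v \in take (index u L) L)]].

Lemma covered_phase2 (L : seq V) : covered L (phase2 e L) = [set x in L].
Proof.
apply/setP => u; rewrite !inE; case uL: (u \in L) => //=.
case uout: (u \in phase2 e L) => //=.
have indep0 : independent e set0 by apply/forallP => x; rewrite inE.
have [v vout /andP[euv]] := greedy_from_dominates indep0 uL (negbT uout).
by rewrite inE /= => vtake; apply/exists_inP; exists v; rewrite // euv.
Qed.

Lemma covered_cons_notin x (L : seq V) (O : {set V}) :
  x \notin O -> covered (x :: L) O \subset covered L O.
Proof.
move=> xO; apply/subsetP => u; rewrite !inE.
case: (eqVneq u x) => [->|ux].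
  by rewrite index_head (negbTE xO) /=; case/exists_inP => v _; rewrite in_nil andbF.
move=> /= /andP[uL /orP[uO|/exists_inP[v vO /andP[euv]]]]; first by rewrite uL uO.
rewrite take_index_cons // inE => /orP[/eqP vx|vtake]; first by rewrite -vx vO in xO.
by rewrite uL /=; apply/orP; right; apply/exists_inP; exists v; rewrite ?euv.
Qed.

Lemma covered_cons x (L : seq V) (O : {set V}) : x \notin L ->
  covered (x :: L) O \subset x |: (nbhd e x :&: [set y in L] :|: covered L (O :\ x)).
Proof.
case: e_simple => e_sym _ xL; apply/subsetP => u; rewrite [u \in covered _ _]inE.
case: (eqVneq u x) => [->|ux]; first by rewrite setU11.
rewrite in_cons (negbTE ux) orFb => /andP[uL /orP[uO|/exists_inP[v vO /andP[euv]]]].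
  by rewrite !inE ux uL uO !orbT.
rewrite take_index_cons // inE => /orP[/eqP vx|vtake].
  by rewrite !inE -vx e_sym euv uL orbT.
apply/setU1P; right; apply/setUP; right; rewrite [u \in covered _ _]inE uL /=.
apply/orP; right; apply/exists_inP; exists v; last by rewrite euv.
by rewrite !inE vO andbT; apply: contraNneq xL => <-; apply: mem_take vtake.
Qed.

Variables (R : realFieldType) (f : {set V} -> R) (beta : R).
Hypotheses (f_ge0 : forall A, 0 <= f A) (f_sub : submodular f).

(* Each [x] in [O] pays, through its tight marginal value, for itself and for its neighbours
   below it in the stack. *)
Lemma covered_weight_le (w : V -> R) (L : seq V) (O : {set V}) :
  tight_stack e f beta w L -> uniq L -> (forall u, 0 <= w u) -> O \subset [set x in L] ->
  \sum_(u in covered L O) w u <= f O.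
Proof.
move=> + + w_ge0; elim: L O => [|x L IH] O /=.
  by move=> _ _ _; rewrite (_ : covered [::] O = set0) ?big_set0 //; apply/setP => u.
case=> [tL wx bx] /andP[xL uL] sO.
have [xO|xO] := boolP (x \in O); last first.
  apply: le_trans (sumr_subset_le w_ge0 (covered_cons_notin L xO)) (IH _ tL uL _).
  apply/subsetP => y yO; move: (subsetP sO y yO); rewrite !inE.
  by case: eqP => // yx; rewrite -yx yO in xO.
set O' := O :\ x.
have sO' : O' \subset [set y in L].
  by apply/subsetP => y; rewrite !inE => /andP[yx /(subsetP sO)]; rewrite !inE (negbTE yx).
have fO : f O = f O' + marginal f O' x by rewrite -setU1_marginal setD1K.
have marg : marginal f [set y in L] x <= marginal f O' x.
  by apply: marginal_antimono; rewrite ?inE.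
apply: le_trans (sumr_subset_le w_ge0 (covered_cons O xL)) _.
rewrite big_setU1 /=; last first.
  by rewrite !inE negb_or (negbTE xL) andbF.
have := sumr_setU_le w_ge0 (nbhd e x :&: [set y in L]) (covered L O').
have := IH O' tL uL sO'; lra.
Qed.

Lemma phase2_weight_le (w : V -> R) (L : seq V) :
  tight_stack e f beta w L -> uniq L -> (forall u, 0 <= w u) ->
  \sum_(u in [set x in L]) w u <= f (phase2 e L).
Proof.
move=> tL uL w_ge0; rewrite -covered_phase2; apply: covered_weight_le => //.
by rewrite -(set0U [set x in L]); apply: greedy_from_sub.
Qed.

End Phase2.

Section Run.
Variables (R : realFieldType) (V : finType) (e : rel V) (f : {set V} -> R) (beta : R)
  (vs : seq V).
Hypothesis vs_order : vertex_ordering vs.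

Local Notation step c := (phase1_step e f beta c).
Local Notation before t := (take (index t vs) vs).

Definition state_before (t : V) (c : V -> bool) : seq V * (V -> R) :=
  foldl (step c) ([::], fun _ => 0) (before t).
Definition stack_before t c : {set V} := [set x in (state_before t c).1].
Definition nbr_weight t c : R :=
  \sum_(u in nbhd e t :&: stack_before t c) (state_before t c).2 u.
Definition gain t c : R := marginal f (stack_before t c) t.
Definition passes t c : bool := (1 + beta) * nbr_weight t c < gain t c.

Definition final_state (c : V -> bool) : seq V * (V -> R) := phase1 e f beta c vs.
Definition stack_end c : {set V} := [set x in (final_state c).1].
Definition weight_end c : V -> R := (final_state c).2.

Let vs_uniq : uniq vs. Proof. by case: vs_order. Qed.
Let mem_vs t : t \in vs. Proof. by case: vs_order. Qed.

Lemma final_state_split t c :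
  final_state c = foldl (step c) (state_before t c) (drop (index t vs) vs).
Proof. by rewrite /final_state /phase1 -{1}(cat_take_drop (index t vs) vs) foldl_cat. Qed.

Lemma final_state_at t c :
  final_state c = foldl (step c) (step c (state_before t c) t) (drop (index t vs).+1 vs).
Proof. by rewrite (final_state_split t) (drop_index (mem_vs t)). Qed.

Lemma notin_before t : t \notin before t.
Proof. by rewrite in_take // ltnn. Qed.

Lemma notin_after t : t \notin drop (index t vs).+1 vs.
Proof.
by have := drop_uniq (index t vs) vs_uniq; rewrite (drop_index (mem_vs t)) => /andP[].
Qed.

Lemma before_notin_drop t u : u \in before t -> u \notin drop (index t vs) vs.
Proof.
move=> ut; move: vs_uniq; rewrite -{1}(cat_take_drop (index t vs) vs) cat_uniq.
by case/and3P => _ /hasPn disj _; apply/negP => /disj; rewrite /= ut.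
Qed.

Lemma mem_state_before t c x : x \in (state_before t c).1 -> x \in before t.
Proof. by move/foldl_step_stack_sub. Qed.

Lemma notin_state_before t c : t \notin (state_before t c).1.
Proof. exact: contra (@mem_state_before t c t) (notin_before t). Qed.

Lemma stack_before_later t c u : u \in stack_before t c -> t \in drop (index u vs) vs.
Proof.
rewrite inE => /mem_state_before/index_ltn lt_ut; have := mem_vs t.
by rewrite -{1}(cat_take_drop (index u vs) vs) mem_cat in_take ?mem_vs // ltnNge (ltnW lt_ut).
Qed.

Lemma weight_end_before t c u : u \in before t -> weight_end c u = (state_before t c).2 u.
Proof.
by move=> ut; rewrite /weight_end (final_state_split t) foldl_step_weight_out ?before_notin_drop.
Qed.

Lemma stack_before_sub_end t c : stack_before t c \subset stack_end c.
Proof.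
apply/subsetP => x; rewrite !inE (final_state_split t).
exact: foldl_step_stack_mono.
Qed.

Lemma mem_stack_end t c : (t \in stack_end c) = passes t c && c t.
Proof.
rewrite inE (final_state_at t).
transitivity (t \in (step c (state_before t c) t).1).
  apply/idP/idP => [/foldl_step_stack_sub|]; last exact: foldl_step_stack_mono.
  by rewrite (negbTE (notin_after t)) orbF.
move: (notin_state_before t c); rewrite /passes /nbr_weight /gain /stack_before.
case: (state_before t c) => Sk w /= tS; rewrite /phase1_step.
by case: ifP => _ /=; rewrite ?mem_head // (negbTE tS).
Qed.

Lemma weight_end_pushed t c : t \in stack_end c -> weight_end c t = gain t c - nbr_weight t c.
Proof.
rewrite mem_stack_end /weight_end (final_state_at t) foldl_step_weight_out ?notin_after //.
rewrite /passes /nbr_weight /gain /stack_before.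
by case: (state_before t c) => Sk w /= pass; rewrite /phase1_step pass /= eqxx.
Qed.

Lemma nbr_weightE t c : nbr_weight t c =
  \sum_(u in stack_end c) weight_end c u * (e t u && (u \in stack_before t c))%:R.
Proof.
rewrite /nbr_weight
  (_ : \sum_(u in _) _ = \sum_(u in nbhd e t :&: stack_before t c) weight_end c u).
  rewrite big_mkcond [RHS]big_mkcond; apply: eq_bigr => u _.
  rewrite in_setI [u \in nbhd e t]inE; have [uS|uS] := boolP (u \in stack_before t c).
    rewrite andbT (subsetP (stack_before_sub_end t c) u uS).
    by case: (e t u); rewrite ?mulr1 ?mulr0.
  by rewrite andbF mulr0; case: ifP.
by apply: eq_bigr => u; rewrite !inE => /andP[_ /mem_state_before/(weight_end_before c)].
Qed.

(* The coin of [t] is only read once [t] has been examined. *)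
Lemma state_before_flip t (c : {ffun V -> bool}) :
  state_before t (flip_at t c) = state_before t c.
Proof.
apply: foldl_step_coin_eq => v vt; rewrite ffunE; case: eqP => // vt'.
by rewrite vt' (negbTE (notin_before t)) in vt.
Qed.

Lemma passes_flip t c : passes t (flip_at t c) = passes t c.
Proof. by rewrite /passes /nbr_weight /gain /stack_before state_before_flip. Qed.

Lemma gain_flip t c : gain t (flip_at t c) = gain t c.
Proof. by rewrite /gain /stack_before state_before_flip. Qed.

Hypothesis beta_gt0 : 0 < beta.

Lemma phase1_inv_before t c : phase1_inv e f beta (state_before t c).
Proof. by apply: (foldl_step_inv beta_gt0); [split | exact: take_uniq |]. Qed.

Lemma phase1_inv_final c : phase1_inv e f beta (final_state c).
Proof. by apply: (foldl_step_inv beta_gt0); [split | |]. Qed.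

Lemma nbr_weight_ge0 t c : 0 <= nbr_weight t c.
Proof. by have [_ w_ge0 _] := phase1_inv_before t c; apply: sumr_ge0 => u _. Qed.

Lemma weight_end_ge0 c u : 0 <= weight_end c u.
Proof. by case: (phase1_inv_final c) => _ w_ge0 _; apply: w_ge0. Qed.

End Run.

Section Analysis.
Variables (R : realFieldType) (V : finType) (e : rel V) (k : nat) (vs : seq V)
  (f : {set V} -> R) (beta p : R).
Hypotheses (e_simple : simple_graph e) (k_ge1 : (1 <= k)%N)
  (k_indep : inductively_k_independent e k vs).
Hypotheses (f_ge0 : forall A, 0 <= f A) (f0 : f set0 = 0) (f_sub : submodular f).
Hypotheses (beta_gt0 : 0 < beta) (p_gt0 : 0 < p) (p_lt1 : p < 1).
Variable T : {set V}.
Hypothesis T_indep : independent e T.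

Let vs_order : vertex_ordering vs. Proof. by case: k_indep. Qed.

Local Notation E := (expect (coin_prob p)).
Local Notation stack_before := (stack_before e f beta vs).
Local Notation nbr_weight := (nbr_weight e f beta vs).
Local Notation gain := (gain e f beta vs).
Local Notation passes := (passes e f beta vs).
Local Notation stack_end := (stack_end e f beta vs).
Local Notation weight_end := (weight_end e f beta vs).

(* A vertex [u] of the stack is charged by [u] itself when [u] lies in [T], and otherwise by
   the vertices of [T] adjacent to [u] and examined after it, which form an independent subset
   of the later neighbourhood of [u]. *)
Lemma charge_count_le c u :
  \sum_(t in T) (e t u && (u \in stack_before t c))%:R + (u \in T)%:R <= k%:R :> R.
Proof.
set A := [set t in T | e t u && (u \in stack_before t c)].
rewrite (_ : \sum_(t in T) _ = #|A|%:R); last first.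
  rewrite -sum1_card natr_sum big_mkcond [RHS]big_mkcond /=; apply: eq_bigr => t _.
  by rewrite [t \in A]inE; case: (t \in T) => //=; case: (_ && _).
rewrite -natrD ler_nat.
have [uT|uT] := boolP (u \in T).
  rewrite (_ : A = set0) ?cards0 //; apply/setP => t; rewrite !inE.
  by apply/negP => /and3P[tT etu _]; have := independentP T_indep tT uT; rewrite etu.
rewrite addn0; apply: (inductively_k_independentP (u := u) k_indep); last first.
  by apply: independent_subset T_indep; apply/subsetP => t; rewrite inE => /andP[].
apply/subsetP => t; rewrite [t \in A]inE => /and3P[_ etu uS].
case: e_simple => e_sym _; rewrite !inE e_sym etu /=.
exact: (stack_before_later (f := f) (beta := beta) vs_order uS).
Qed.

Definition charge t c : R := nbr_weight t c + weight_end c t * (t \in stack_end c)%:R.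

Lemma charging c : \sum_(t in T) charge t c <= k%:R * \sum_(u in stack_end c) weight_end c u.
Proof.
rewrite /charge big_split /=; under eq_bigr do rewrite (nbr_weightE e f beta vs_order).
rewrite exchange_big /=
  (_ : \sum_(t in T) _ = \sum_(u in stack_end c) weight_end c u * (u \in T)%:R).
  rewrite -big_split /= mulr_sumr; apply: ler_sum => u _.
  rewrite -mulr_sumr -mulrDr mulrC; apply: ler_wpM2r; last exact: charge_count_le.
  exact: (weight_end_ge0 e f vs_order beta_gt0).
rewrite big_mkcond [RHS]big_mkcond; apply: eq_bigr => u _.
by case: (u \in T); case: (u \in stack_end c); rewrite /= ?mulr1 ?mulr0.
Qed.

Lemma weight_le_output c :
  \sum_(u in stack_end c) weight_end c u <= f (pd_rand e f beta c vs).
Proof.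
have [uS w_ge0 tS] := phase1_inv_final e f vs_order beta_gt0 c.
exact: (phase2_weight_le e_simple f_ge0 f_sub tS uS).
Qed.

Lemma f_stack_end_le c :
  beta * f (stack_end c) <= (1 + beta) * \sum_(u in stack_end c) weight_end c u.
Proof.
have [uS _ tS] := phase1_inv_final e f vs_order beta_gt0 c.
exact: tight_stack_f_le f0 tS uS.
Qed.

(* An upper bound on the marginal value of [t] for the final stack: nothing if [t] was pushed,
   its neighbours' weight if it failed the threshold test, and its gain if it lost its coin. *)
Definition lost_gain t c : R :=
  (1 + beta) * nbr_weight t c * (~~ passes t c)%:R + gain t c * (passes t c && ~~ c t)%:R.

Lemma f_setU_stack_end_le c :
  f (T :|: stack_end c) <= f (stack_end c) + \sum_(t in T) lost_gain t c.
Proof.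
rewrite setUC; apply: le_trans (submodular_le_marginal_sum f_sub _ _) _.
rewrite lerD2l; apply: ler_sum => t _; rewrite /lost_gain.
have [tS|tS] := boolP (t \in stack_end c).
  move: (tS); rewrite (mem_stack_end e f beta vs_order) => /andP[-> ->].
  by rewrite marginal_mem // !mulr0 addr0.
have le_gain : marginal f (stack_end c) t <= gain t c.
  by apply: marginal_antimono => //; apply: stack_before_sub_end.
move: tS; rewrite (mem_stack_end e f beta vs_order); case: (boolP (passes t c)) => /= pass.
  by move/negbTE->; rewrite mulr0 add0r mulr1.
by rewrite mulr1 mulr0 addr0 => _; apply: le_trans le_gain _; rewrite leNgt.
Qed.

Let coin_ge0 : forall c : {ffun V -> bool}, 0 <= coin_prob p c := coin_prob_ge0 p_gt0 p_lt1.

Lemma pushed_indicatorE t (c : {ffun V -> bool}) :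
  (t \in stack_end c)%:R = (passes t c)%:R * (c t)%:R :> R.
Proof. by rewrite (mem_stack_end e f beta vs_order) -natrM mulnb. Qed.

Lemma expect_pushed_le v : E (fun c => (v \in stack_end c)%:R) <= p.
Proof.
rewrite (eq_expect _ (pushed_indicatorE v));
rewrite (@expect_coin_true _ _ p v (fun c => (passes v c)%:R)); last first.
  by move=> c; rewrite (passes_flip e f beta vs_order).
apply: ler_piMr; first exact: ltW.
rewrite -[X in _ <= X](coin_prob_sum1 V p); apply: ler_sum => c _.
by apply: ler_piMr; case: (passes v c); rewrite ?ler01.
Qed.

Lemma expect_f_setU_stack_end : (1 - p) * f T <= E (fun c => f (T :|: stack_end c)).
Proof.
rewrite -{1}(setU0 T).
exact: (submodular_expect_ge coin_ge0 (coin_prob_sum1 V p) (fun A => f_ge0 _)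
  (submodular_setUl f_sub T) expect_pushed_le (ltW p_gt0)).
Qed.

Local Notation M := (Num.max ((1 - p) / p) (1 + beta)).

(* Conditioned on the run up to [t], its coin is independent: losing the coin after passing the
   test is (1 - p) / p times as likely as winning it, and winning it pushes [t] with weight
   [gain t c - nbr_weight t c]. *)
Lemma expect_lost_coin t : E (fun c => gain t c * (passes t c && ~~ c t)%:R) =
  (1 - p) / p * E (fun c => (weight_end c t + nbr_weight t c) * (t \in stack_end c)%:R).
Proof.
pose G (c : {ffun V -> bool}) := gain t c * (passes t c)%:R.
have G_flip c : G (flip_at t c) = G c.
  by rewrite /G (passes_flip e f beta vs_order) (gain_flip e f beta vs_order).
have G_pushed (c : {ffun V -> bool}) :
    G c * (c t)%:R = (weight_end c t + nbr_weight t c) * (t \in stack_end c)%:R.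
  rewrite /G -mulrA -pushed_indicatorE; have [tS|] := boolP (t \in stack_end c).
    by rewrite (weight_end_pushed vs_order tS) subrK.
  by rewrite !mulr0.
have G_lost (c : {ffun V -> bool}) :
    gain t c * (passes t c && ~~ c t)%:R = G c * (~~ c t)%:R.
  by rewrite /G -mulrA -natrM mulnb.
rewrite -(eq_expect _ G_pushed) (eq_expect _ G_lost).
rewrite (expect_coin_true p G_flip) (expect_coin_false p G_flip); field.
by rewrite lt0r_neq0.
Qed.

Lemma expect_lost_gain_le t : E (lost_gain t) <= M * E (charge t).
Proof.
rewrite /lost_gain expectD expect_lost_coin -!expectZ -expectD.
apply: (ler_expect coin_ge0) => c; rewrite /charge.
have Y_ge0 := nbr_weight_ge0 e f vs_order beta_gt0 t c.
have w_ge0 := weight_end_ge0 e f vs_order beta_gt0 c t.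
have odds_le : (1 - p) / p <= M by rewrite le_max lexx.
have beta_le : 1 + beta <= M by rewrite le_max lexx orbT.
have M_ge0 : 0 <= M by apply: le_trans beta_le; rewrite addr_ge0 // ltW.
rewrite (mem_stack_end e f beta vs_order).
case: (passes t c); case: (c t); rewrite /= ?mulr1n ?mulr0n ?mulr1 ?mulr0 ?addr0 ?add0r.
- by rewrite [nbr_weight t c + _]addrC; apply: ler_wpM2r => //; apply: addr_ge0.
- exact: mulr_ge0.
- exact: ler_wpM2r.
- exact: ler_wpM2r.
Qed.

Lemma outcome_bound c :
  f (stack_end c) + M * \sum_(t in T) charge t c
    <= (k%:R * M + (1 + beta) / beta) * f (pd_rand e f beta c vs).
Proof.
set W := \sum_(u in stack_end c) weight_end c u.
have M_ge0 : 0 <= M by rewrite le_max addr_ge0 ?orbT // ltW.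
have f_le : f (stack_end c) <= (1 + beta) / beta * W.
  by rewrite mulrAC ler_pdivlMr // mulrC f_stack_end_le.
have charge_le : M * \sum_(t in T) charge t c <= M * (k%:R * W).
  exact: ler_wpM2l (charging c).
apply: le_trans (lerD f_le charge_le) _.
rewrite (_ : (1 + beta) / beta * W + M * (k%:R * W) = (k%:R * M + (1 + beta) / beta) * W);
  last by ring.
apply: ler_wpM2l (weight_le_output c).
have beta_ge0 : 0 <= beta := ltW beta_gt0.
by apply: addr_ge0; [apply: mulr_ge0 | apply: divr_ge0; rewrite ?addr_ge0].
Qed.

Lemma expected_output_ge :
  (1 - p) * f T <= (k%:R * M + (1 + beta) / beta) * expected_output e f beta p vs.
Proof.
apply: le_trans expect_f_setU_stack_end _.
apply: le_trans (ler_expect coin_ge0 (fun c => f_setU_stack_end_le c)) _.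
rewrite expectD expect_sum.
apply: le_trans (_ : _ <= E (fun c => f (stack_end c) + M * \sum_(t in T) charge t c)) _.
  by rewrite expectD expectZ expect_sum lerD2l mulr_sumr; apply: ler_sum => t _;
    apply: expect_lost_gain_le.
rewrite -expectZ; apply: (ler_expect coin_ge0) => c; exact: outcome_bound.
Qed.

End Analysis.

Theorem lemma10 (R : realFieldType) (V : finType) (e : rel V) (k : nat)
    (vs : seq V) (f : {set V} -> R) (beta p : R) :
  simple_graph e ->
  (1 <= k)%N ->
  inductively_k_independent e k vs ->
  (forall A, 0 <= f A) -> f set0 = 0 -> submodular f ->
  0 < beta -> 0 < p -> p < 1 ->
  forall T : {set V}, independent e T ->
    f T <= (k%:R * Num.max ((1 - p) / p) (1 + beta) + (1 + beta) / beta)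
             / (1 - p) * expected_output e f beta p vs.
Proof.
move=> e_simple k_ge1 k_indep f_ge0 f0 f_sub beta_gt0 p_gt0 p_lt1 T T_indep.
rewrite mulrAC ler_pdivlMr ?subr_gt0 // mulrC.
exact: expected_output_ge.
Qed.
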